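(* Let $\Omega_n=\dfrac{\pi^{n/2}}{\Gamma\left(\frac n2+1\right)}$ for $n\in\mathbb{N}_0$, and \[ c(n)=1+\frac1{4n}+\frac1{32n^2}-\frac5{128n^3}-\frac{21}{2048n^4}+\frac{399}{8192n^5},\qquad d(n)=c(n)+\frac{869}{65536n^6}. \] Then $\sqrt{\frac{n}{2\pi}}\,c(n)<\frac{\Omega_{n-1}}{\Omega_n}$ for every integer $n\ge12$, and $\frac{\Omega_{n-1}}{\Omega_n}<\sqrt{\frac n{2\pi}}\,d(n)$ for every integer $n\ge1$.
   Context: $\Omega_n$ is the volume of the unit ball in $\mathbb{R}^n$ ($\Omega_0=1$); $\Gamma$ is Euler's gamma function. *)

From Stdlib Require Import Reals.
From Coquelicot Require Import Coquelicot.
Open Scope R_scope.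

Definition Gamma (x : R) : R :=
  RInt_gen (fun t => Rpower t (x - 1) * exp (- t)) (at_right 0) (Rbar_locally p_infty).

Definition Omega (n : nat) : R :=
  Rpower PI (INR n / 2) / Gamma (INR n / 2 + 1).

Definition c_fn (n : nat) : R :=
  let x := INR n in
  1 + 1 / (4 * x) + 1 / (32 * x ^ 2) - 5 / (128 * x ^ 3)
    - 21 / (2048 * x ^ 4) + 399 / (8192 * x ^ 5).

Definition d_fn (n : nat) : R := c_fn n + 869 / (65536 * INR n ^ 6).

(* Let rho x = Gamma (x/2 + 1) / Gamma (x/2 + 1/2), so that
   Omega_{n-1} / Omega_n = rho n / sqrt pi, and sigma x = 2 rho(x)^2 / x.
   The functional equation of Gamma gives rho(x) rho(x+1) = (x+1)/2, and the
   log-convexity of Gamma (AM-GM under the integral) makes rho nondecreasing;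
   hence 1 <= sigma x <= 1 + 1/x and sigma (x+2) = sigma x * x(x+2)/(x+1)^2.
   An explicit polynomial inequality then shows that sigma/c^2 and d^2/sigma
   strictly decrease along x, x+2, x+4, ...; as both tend to 1, they stay
   above 1. *)

From Stdlib Require Import Reals Lra Lia.
From Coquelicot Require Import Coquelicot.
Open Scope R_scope.

Definition is_lim2 (F : R -> R -> R) (l : R) : Prop :=
  forall eps, 0 < eps -> exists d, 0 < d /\ exists M,
    forall a b, 0 < a -> a < d -> M < b -> Rabs (F a b - l) < eps.

Lemma is_lim2_const (c : R) : is_lim2 (fun _ _ => c) c.
Proof.
  intros eps Heps. exists 1. split; [lra|]. exists 0. intros.
  rewrite Rminus_eq_0, Rabs_R0. lra.
Qed.

Lemma is_lim2_ext (F G : R -> R -> R) (l : R) :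
  (forall a b, 0 < a -> a < 1 -> 2 < b -> F a b = G a b) ->
  is_lim2 F l -> is_lim2 G l.
Proof.
  intros EFG HF eps Heps. destruct (HF eps Heps) as [d [Hd [M H]]].
  exists (Rmin d 1). split; [apply Rmin_pos; lra|]. exists (Rmax M 2).
  intros a b Ha Had Hb.
  pose proof (Rmin_l d 1). pose proof (Rmin_r d 1).
  pose proof (Rmax_l M 2). pose proof (Rmax_r M 2).
  rewrite <- EFG by lra. apply H; lra.
Qed.

Lemma is_lim2_lin (F G : R -> R -> R) (l m p q : R) :
  is_lim2 F l -> is_lim2 G m ->
  is_lim2 (fun a b => p * F a b + q * G a b) (p * l + q * m).
Proof.
  intros HF HG eps Heps.
  set (k := Rabs p + Rabs q + 1).
  assert (Hk : 0 < k) by (unfold k; pose proof (Rabs_pos p); pose proof (Rabs_pos q); lra).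
  assert (Hek : 0 < eps / k) by (apply Rdiv_lt_0_compat; lra).
  destruct (HF _ Hek) as [d1 [Hd1 [M1 H1]]].
  destruct (HG _ Hek) as [d2 [Hd2 [M2 H2]]].
  exists (Rmin d1 d2). split; [apply Rmin_pos; lra|]. exists (Rmax M1 M2).
  intros a b Ha Had Hb.
  pose proof (Rmin_l d1 d2). pose proof (Rmin_r d1 d2).
  pose proof (Rmax_l M1 M2). pose proof (Rmax_r M1 M2).
  specialize (H1 a b Ha ltac:(lra) ltac:(lra)). specialize (H2 a b Ha ltac:(lra) ltac:(lra)).
  replace (p * F a b + q * G a b - (p * l + q * m))
    with (p * (F a b - l) + q * (G a b - m)) by ring.
  eapply Rle_lt_trans; [apply Rabs_triang|]. rewrite !Rabs_mult.
  assert (Rabs p * Rabs (F a b - l) <= Rabs p * (eps / k))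
    by (apply Rmult_le_compat_l; [apply Rabs_pos|lra]).
  assert (Rabs q * Rabs (G a b - m) <= Rabs q * (eps / k))
    by (apply Rmult_le_compat_l; [apply Rabs_pos|lra]).
  assert ((Rabs p + Rabs q) * (eps / k) < eps).
  { apply (Rmult_lt_reg_r k); [exact Hk|].
    replace ((Rabs p + Rabs q) * (eps / k) * k) with ((Rabs p + Rabs q) * eps) by (field; lra).
    unfold k. nra. }
  lra.
Qed.

Lemma is_lim2_le (F G : R -> R -> R) (l m : R) :
  is_lim2 F l -> is_lim2 G m ->
  (forall a b, 0 < a -> a < 1 -> 2 < b -> F a b <= G a b) -> l <= m.
Proof.
  intros HF HG HFG. apply Rnot_lt_le. intro Hml.
  set (eps := (l - m) / 2).
  destruct (HF eps ltac:(unfold eps; lra)) as [d1 [Hd1 [M1 H1]]].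
  destruct (HG eps ltac:(unfold eps; lra)) as [d2 [Hd2 [M2 H2]]].
  set (a := Rmin 1 (Rmin d1 d2) / 2).
  set (b := Rmax 2 (Rmax M1 M2) + 1).
  assert (0 < Rmin 1 (Rmin d1 d2)) by (repeat apply Rmin_pos; lra).
  pose proof (Rmin_l 1 (Rmin d1 d2)). pose proof (Rmin_r 1 (Rmin d1 d2)).
  pose proof (Rmin_l d1 d2). pose proof (Rmin_r d1 d2).
  pose proof (Rmax_l 2 (Rmax M1 M2)). pose proof (Rmax_r 2 (Rmax M1 M2)).
  pose proof (Rmax_l M1 M2). pose proof (Rmax_r M1 M2).
  specialize (H1 a b). specialize (H2 a b). specialize (HFG a b).
  unfold a, b in *.
  apply Rabs_lt_between in H1; [|lra|lra|lra].
  apply Rabs_lt_between in H2; [|lra|lra|lra].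
  specialize (HFG ltac:(lra) ltac:(lra) ltac:(lra)). unfold eps in *. lra.
Qed.

Lemma is_lim2_unique (F : R -> R -> R) (l m : R) :
  is_lim2 F l -> is_lim2 F m -> l = m.
Proof.
  intros Hl Hm. apply Rle_antisym; apply (is_lim2_le F F); auto; intros; lra.
Qed.

Section IntegralOnHalfLine.

Variable f : R -> R.
Hypothesis f_ex_RInt : forall a b, 0 < a -> a < b -> ex_RInt f a b.
Hypothesis f_ge0 : forall t, 0 < t -> 0 <= f t.

Lemma RInt_le_RInt_wider (a a' b' b : R) :
  0 < a -> a <= a' -> a' < b' -> b' <= b -> RInt f a' b' <= RInt f a b.
Proof.
  intros Ha Haa' Hab' Hbb'.
  assert (E1 : ex_RInt f a a').
  { destruct (Req_dec a a') as [<-|]; [apply ex_RInt_point | apply f_ex_RInt; lra]. }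
  assert (E2 : ex_RInt f b' b).
  { destruct (Req_dec b' b) as [<-|]; [apply ex_RInt_point | apply f_ex_RInt; lra]. }
  assert (E3 : ex_RInt f a' b') by (apply f_ex_RInt; lra).
  rewrite <- (RInt_Chasles f a a' b); [| exact E1 | apply (ex_RInt_Chasles _ _ b'); auto].
  rewrite <- (RInt_Chasles f a' b' b); auto.
  assert (0 <= RInt f a a') by (apply RInt_ge_0; auto; intros; apply f_ge0; lra).
  assert (0 <= RInt f b' b) by (apply RInt_ge_0; auto; intros; apply f_ge0; lra).
  unfold plus; simpl. lra.
Qed.

(* The limit is the supremum of the integrals over compact subintervals. *)
Lemma is_lim2_RInt_of_bounded (B : R) :
  (forall a b, 0 < a -> a < b -> RInt f a b <= B) ->
  exists l, is_lim2 (fun a b => RInt f a b) l.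
Proof.
  intros HB.
  set (E := fun v => exists a b, 0 < a /\ a < b /\ v = RInt f a b).
  assert (HEb : bound E) by (exists B; intros v [a [b [? [? ->]]]]; apply HB; auto).
  assert (HEn : exists v, E v) by (exists (RInt f 1 2), 1, 2; repeat split; lra).
  destruct (completeness E HEb HEn) as [m [Hub Hlub]].
  exists m. intros eps Heps.
  assert (exists a0 b0, 0 < a0 /\ a0 < b0 /\ m - eps < RInt f a0 b0)
    as [a0 [b0 [Ha0 [Hab0 Hv]]]].
  { apply Classical_Prop.NNPP. intro Hn.
    assert (m <= m - eps); [|lra].
    apply Hlub. intros v [a [b [Ha [Hab ->]]]].
    apply Rnot_lt_le. intro Hc. apply Hn. exists a, b. auto. }
  exists a0. split; [exact Ha0|]. exists b0. intros a b Ha Had Hb.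
  assert (RInt f a0 b0 <= RInt f a b) by (apply RInt_le_RInt_wider; lra).
  assert (RInt f a b <= m) by (apply Hub; exists a, b; repeat split; lra).
  apply Rabs_lt_between. lra.
Qed.

Lemma is_RInt_gen_of_is_lim2 (l : R) :
  is_lim2 (fun a b => RInt f a b) l ->
  is_RInt_gen f (at_right 0) (Rbar_locally p_infty) l.
Proof.
  intros Hl P [eps HP].
  destruct (Hl eps (cond_pos eps)) as [d [Hd [M HM]]].
  apply (Filter_prod _ _ _ (fun a => 0 < a /\ a < d) (fun b => Rmax M d < b)).
  - exists (mkposreal d Hd). intros y Hy Hy0. change R in y. split; [exact Hy0|].
    assert (Hy2 : Rabs (y - 0) < d) by exact Hy.
    rewrite Rminus_0_r in Hy2. apply Rabs_lt_between in Hy2. lra.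
  - exists (Rmax M d). intros x Hx. exact Hx.
  - intros a b [Ha0 Had] Hb. pose proof (Rmax_l M d). pose proof (Rmax_r M d).
    exists (RInt (V:=R_CompleteNormedModule) f a b). split.
    + apply (RInt_correct (V:=R_CompleteNormedModule)), f_ex_RInt; lra.
    + apply HP. apply HM; lra.
Qed.

End IntegralOnHalfLine.

Lemma exp_le_exp_compat (x y : R) : x <= y -> exp x <= exp y.
Proof. intros [H|<-]; [left; apply exp_increasing; exact H | lra]. Qed.

Lemma ln_le_sub_1 (x : R) : 0 < x -> ln x <= x - 1.
Proof. intros Hx. pose proof (exp_ineq1_le (ln x)). rewrite exp_ln in H by lra. lra. Qed.

Lemma continuous_of_ex_derive (f : R -> R) (x : R) : ex_derive f x -> continuous f x.
Proof. apply (ex_derive_continuous (K:=R_AbsRing) (V:=R_NormedModule)). Qed.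

Lemma Rpower_le_exp_half (al t : R) : 0 <= al -> 0 < t ->
  Rpower t al <= exp (al * ln (2 * al + 2)) * exp (t / 2).
Proof.
  intros Hal Ht. unfold Rpower. rewrite <- exp_plus. apply exp_le_exp_compat.
  set (c := 2 * al + 2).
  assert (Hc : 0 < c) by (unfold c; lra).
  assert (E : ln t = ln (t / c) + ln c).
  { rewrite <- ln_mult by (try apply Rdiv_lt_0_compat; lra). f_equal. field. lra. }
  pose proof (ln_le_sub_1 (t / c) ltac:(apply Rdiv_lt_0_compat; lra)).
  rewrite E.
  assert (al * (t / c) <= t / 2).
  { unfold c. apply (Rmult_le_reg_r (2 * al + 2)); [lra|].
    replace (al * (t / (2 * al + 2)) * (2 * al + 2)) with (al * t) by (field; lra). nra. }
  nra.
Qed.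

Lemma RInt_exp_half (K a b : R) :
  RInt (fun t => K * exp (- t / 2)) a b = 2 * K * exp (- a / 2) - 2 * K * exp (- b / 2).
Proof.
  apply (is_RInt_unique (V:=R_CompleteNormedModule)).
  replace (2 * K * exp (- a / 2) - 2 * K * exp (- b / 2))
    with (minus (- 2 * K * exp (- b / 2)) (- 2 * K * exp (- a / 2)))
    by (unfold minus, plus, opp; simpl; ring).
  apply (is_RInt_derive (fun t => - 2 * K * exp (- t / 2))).
  - intros x _. auto_derive; auto. unfold Rdiv. field.
  - intros x _. apply continuous_of_ex_derive. auto_derive. auto.
Qed.

Definition gamma_integrand (y t : R) : R := Rpower t (y - 1) * exp (- t).

Lemma ex_derive_gamma_integrand (y t : R) : 0 < t -> ex_derive (gamma_integrand y) t.
Proof. intros Ht. unfold gamma_integrand, Rpower. auto_derive. lra. Qed.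

Lemma ex_RInt_gamma_integrand (y a b : R) :
  0 < a -> a < b -> ex_RInt (gamma_integrand y) a b.
Proof.
  intros Ha Hab. apply (ex_RInt_continuous (V:=R_CompleteNormedModule)). intros z Hz.
  rewrite Rmin_left in Hz by lra. apply continuous_of_ex_derive, ex_derive_gamma_integrand. lra.
Qed.

Lemma gamma_integrand_ge0 (y t : R) : 0 <= gamma_integrand y t.
Proof.
  unfold gamma_integrand, Rpower.
  pose proof (exp_pos ((y - 1) * ln t)). pose proof (exp_pos (- t)). nra.
Qed.

Lemma RInt_gamma_integrand_le (y a b : R) : 1 <= y -> 0 < a -> a < b ->
  RInt (gamma_integrand y) a b <= 2 * exp ((y - 1) * ln (2 * (y - 1) + 2)).
Proof.
  intros Hy Ha Hab. set (K := exp ((y - 1) * ln (2 * (y - 1) + 2))).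
  apply Rle_trans with (RInt (fun t => K * exp (- t / 2)) a b).
  - apply RInt_le; [lra | apply ex_RInt_gamma_integrand; auto | |].
    + apply (ex_RInt_continuous (V:=R_CompleteNormedModule)). intros z _.
      apply continuous_of_ex_derive. auto_derive. auto.
    + intros t Ht. unfold gamma_integrand.
      pose proof (Rpower_le_exp_half (y - 1) t ltac:(lra) ltac:(lra)) as Hp. fold K in Hp.
      replace (exp (- t / 2)) with (exp (t / 2) * exp (- t))
        by (rewrite <- exp_plus; f_equal; field).
      pose proof (exp_pos (- t)). nra.
  - rewrite RInt_exp_half.
    assert (0 < K) by apply exp_pos. pose proof (exp_pos (- b / 2)).
    assert (exp (- a / 2) <= 1) by (rewrite <- exp_0; apply exp_le_exp_compat; lra).
    nra.
Qed.

Lemma is_lim2_Gamma (y : R) : 1 <= y ->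
  is_lim2 (fun a b => RInt (gamma_integrand y) a b) (Gamma y).
Proof.
  intros Hy.
  assert (Hex : forall a b, 0 < a -> a < b -> ex_RInt (gamma_integrand y) a b)
    by (intros; apply ex_RInt_gamma_integrand; auto).
  destruct (is_lim2_RInt_of_bounded _ Hex (fun t _ => gamma_integrand_ge0 y t)
              (2 * exp ((y - 1) * ln (2 * (y - 1) + 2))))
    as [l Hl]; [intros; apply RInt_gamma_integrand_le; auto|].
  replace (Gamma y) with l; [exact Hl|].
  symmetry. apply is_RInt_gen_unique. exact (is_RInt_gen_of_is_lim2 _ Hex l Hl).
Qed.

Lemma Gamma_gt0 (y : R) : 1 <= y -> 0 < Gamma y.
Proof.
  intros Hy.
  assert (H12 : exp (-2) <= RInt (gamma_integrand y) 1 2).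
  { apply Rle_trans with (RInt (fun _ => exp (-2)) 1 2).
    - rewrite RInt_const. unfold scal; simpl; unfold mult; simpl. lra.
    - apply RInt_le; [lra | apply ex_RInt_const | apply ex_RInt_gamma_integrand; lra |].
      intros t Ht. unfold gamma_integrand, Rpower.
      assert (0 < ln t) by (rewrite <- ln_1; apply ln_increasing; lra).
      assert (1 <= exp ((y - 1) * ln t)).
      { rewrite <- exp_0 at 1. apply exp_le_exp_compat. nra. }
      assert (exp (-2) <= exp (- t)) by (apply exp_le_exp_compat; lra).
      pose proof (exp_pos (-2)). nra. }
  apply Rlt_le_trans with (exp (-2)); [apply exp_pos|].
  apply Rle_trans with (RInt (gamma_integrand y) 1 2); [exact H12|].
  apply (is_lim2_le _ _ _ _ (is_lim2_const _) (is_lim2_Gamma y Hy)).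
  intros a b Ha Ha1 Hb. apply RInt_le_RInt_wider; try lra.
  - intros; apply ex_RInt_gamma_integrand; auto.
  - intros; apply gamma_integrand_ge0.
Qed.

Lemma Rpower_mul_exp_le_inv (y t : R) : 0 <= y -> 0 < t ->
  Rpower t y * exp (- t) <= 2 * exp (y * ln (2 * y + 2)) / t.
Proof.
  intros Hy Ht. set (K := exp (y * ln (2 * y + 2))).
  assert (HK : 0 < K) by apply exp_pos.
  pose proof (Rpower_le_exp_half y t Hy Ht) as Hp. fold K in Hp.
  set (E := exp (t / 2)) in *.
  assert (HE : E * exp (- t) * E = 1).
  { unfold E. rewrite <- !exp_plus. replace (t / 2 + - t + t / 2) with 0 by field. apply exp_0. }
  assert (HEt : 1 + t / 2 <= E) by apply exp_ineq1_le.
  pose proof (exp_pos (- t)).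
  apply (Rmult_le_reg_r t); [exact Ht|].
  replace (2 * K / t * t) with (2 * K) by (field; lra).
  apply Rle_trans with (K * E * exp (- t) * t); [apply Rmult_le_compat_r; nra|].
  assert (HEe : 0 < E * exp (- t)) by (apply Rmult_lt_0_compat; [unfold E; apply exp_pos | lra]).
  assert (E * exp (- t) * t <= 2).
  { apply Rle_trans with (E * exp (- t) * (2 * E)); [apply Rmult_le_compat_l; lra | nra]. }
  nra.
Qed.

Lemma is_lim2_boundary_term (y : R) : 1 <= y ->
  is_lim2 (fun a b => Rpower a y * exp (- a) - Rpower b y * exp (- b)) 0.
Proof.
  intros Hy eps Heps.
  set (K := exp (y * ln (2 * y + 2))).
  assert (HK : 0 < K) by apply exp_pos.
  exists (Rmin 1 (eps / 2)). split; [apply Rmin_pos; lra|].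
  exists (4 * K / eps). intros a b Ha Had Hb.
  pose proof (Rmin_l 1 (eps / 2)). pose proof (Rmin_r 1 (eps / 2)).
  assert (0 < 4 * K / eps) by (apply Rdiv_lt_0_compat; lra).
  assert (Ha0 : 0 <= Rpower a y * exp (- a)).
  { unfold Rpower. pose proof (exp_pos (y * ln a)). pose proof (exp_pos (- a)). nra. }
  assert (Hb0 : 0 <= Rpower b y * exp (- b)).
  { unfold Rpower. pose proof (exp_pos (y * ln b)). pose proof (exp_pos (- b)). nra. }
  assert (Ha1 : Rpower a y * exp (- a) < eps / 2).
  { assert (ln a < 0) by (rewrite <- ln_1; apply ln_increasing; lra).
    assert (Rpower a y <= a).
    { unfold Rpower. rewrite <- (exp_ln a) at 2 by lra. apply exp_le_exp_compat. nra. }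
    assert (exp (- a) <= 1) by (rewrite <- exp_0; apply exp_le_exp_compat; lra).
    pose proof (exp_pos (- a)). nra. }
  assert (Hb1 : Rpower b y * exp (- b) < eps / 2).
  { pose proof (Rpower_mul_exp_le_inv y b ltac:(lra) ltac:(lra)) as Hbound. fold K in Hbound.
    apply Rle_lt_trans with (2 * K / b); [exact Hbound|].
    apply (Rmult_lt_reg_r (b * 2 / eps)); [apply Rdiv_lt_0_compat; lra|].
    replace (2 * K / b * (b * 2 / eps)) with (4 * K / eps) by (field; lra).
    replace (eps / 2 * (b * 2 / eps)) with b by (field; lra). exact Hb. }
  rewrite Rminus_0_r. apply Rabs_lt_between. lra.
Qed.

Lemma RInt_gamma_integrand_succ (y a b : R) : 0 < a -> a < b ->
  RInt (gamma_integrand (y + 1)) a b =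
  y * RInt (gamma_integrand y) a b + (Rpower a y * exp (- a) - Rpower b y * exp (- b)).
Proof.
  intros Ha Hab. apply (is_RInt_unique (V:=R_CompleteNormedModule)).
  set (g := fun t => - (Rpower t y * exp (- t))).
  set (D := fun t => Rpower t y * exp (- t) - y * gamma_integrand y t).
  assert (HD : is_RInt D a b (minus (g b) (g a))).
  { apply (is_RInt_derive (V:=R_CompleteNormedModule)).
    - intros x Hx. rewrite Rmin_left, Rmax_right in Hx by lra.
      unfold g, D, gamma_integrand, Rpower. auto_derive; [lra|].
      assert (E : exp ((y - 1) * ln x) = exp (y * ln x) / x).
      { replace ((y - 1) * ln x) with (y * ln x + - ln x) by ring.
        rewrite exp_plus, exp_Ropp, exp_ln by lra. unfold Rdiv. ring. }
      rewrite E. field. lra.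
    - intros x Hx. rewrite Rmin_left, Rmax_right in Hx by lra.
      apply continuous_of_ex_derive. unfold D, gamma_integrand, Rpower. auto_derive. lra. }
  assert (HI := RInt_correct (V:=R_CompleteNormedModule) _ a b
                  (ex_RInt_gamma_integrand y a b Ha Hab)).
  assert (H := is_RInt_plus _ _ a b _ _ (is_RInt_scal _ a b y _ HI) HD).
  replace (y * RInt (gamma_integrand y) a b + (Rpower a y * exp (- a) - Rpower b y * exp (- b)))
    with (plus (scal y (RInt (gamma_integrand y) a b)) (minus (g b) (g a)))
    by (unfold g, minus, plus, opp, scal; simpl; unfold mult; simpl; ring).
  eapply is_RInt_ext; [|exact H].
  intros x Hx. unfold plus, scal, D; simpl; unfold mult; simpl.
  unfold gamma_integrand. replace (y + 1 - 1) with y by ring. ring.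
Qed.

Lemma Gamma_succ (y : R) : 1 <= y -> Gamma (y + 1) = y * Gamma y.
Proof.
  intros Hy.
  apply (is_lim2_unique (fun a b => RInt (gamma_integrand (y + 1)) a b));
    [apply is_lim2_Gamma; lra|].
  replace (y * Gamma y) with (y * Gamma y + 1 * 0) by ring.
  apply (is_lim2_ext (fun a b => y * RInt (gamma_integrand y) a b
                      + 1 * (Rpower a y * exp (- a) - Rpower b y * exp (- b)))).
  - intros a b Ha Ha1 Hb. rewrite RInt_gamma_integrand_succ by lra. ring.
  - apply is_lim2_lin; [apply is_lim2_Gamma | apply is_lim2_boundary_term]; lra.
Qed.

(* [t^(y-1)] is the geometric mean of [t^(y-3/2)] and [t^(y-1/2)]. *)
Lemma gamma_integrand_amgm (y lam t : R) : 0 < lam -> 0 < t ->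
  2 * gamma_integrand y t <=
  lam * gamma_integrand (y - / 2) t + / lam * gamma_integrand (y + / 2) t.
Proof.
  intros Hl Ht. unfold gamma_integrand.
  set (w := Rpower t (y - / 2 - 1)). set (u := Rpower t (/ 2)). set (e := exp (- t)).
  assert (R1 : Rpower t (y - 1) = w * u) by (unfold w, u; rewrite <- Rpower_plus; f_equal; field).
  assert (R2 : Rpower t (y + / 2 - 1) = w * u * u)
    by (unfold w, u; rewrite <- !Rpower_plus; f_equal; field).
  rewrite R1, R2.
  assert (Hw : 0 < w) by (unfold w, Rpower; apply exp_pos).
  assert (He : 0 < e) by (unfold e; apply exp_pos).
  assert (0 <= w * e * (lam - u) ^ 2 / lam).
  { apply Rmult_le_pos; [|left; apply Rinv_0_lt_compat; lra].
    apply Rmult_le_pos; [nra | apply pow2_ge_0]. }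
  assert (lam * (w * e) + / lam * (w * u * u * e) - 2 * (w * u * e)
          = w * e * (lam - u) ^ 2 / lam) by (field; lra).
  lra.
Qed.

Lemma is_RInt_lin (f g : R -> R) (p q a b If Ig : R) : is_RInt f a b If -> is_RInt g a b Ig ->
  is_RInt (fun t => p * f t + q * g t) a b (p * If + q * Ig).
Proof.
  intros Hf Hg.
  apply (is_RInt_plus (V:=R_CompleteNormedModule) (fun t => p * f t) (fun t => q * g t));
    apply (is_RInt_scal (V:=R_CompleteNormedModule)); assumption.
Qed.

Lemma RInt_lin (f g : R -> R) (p q a b : R) : ex_RInt f a b -> ex_RInt g a b ->
  RInt (fun t => p * f t + q * g t) a b = p * RInt f a b + q * RInt g a b.
Proof.
  intros Hf Hg. apply (is_RInt_unique (V:=R_CompleteNormedModule)).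
  apply is_RInt_lin; apply (RInt_correct (V:=R_CompleteNormedModule)); assumption.
Qed.

Lemma Gamma_sq_le (y : R) : 3 / 2 <= y -> Gamma y ^ 2 <= Gamma (y - / 2) * Gamma (y + / 2).
Proof.
  intros Hy.
  set (A := Gamma (y - / 2)). set (B := Gamma (y + / 2)).
  assert (HA : 0 < A) by (apply Gamma_gt0; lra).
  assert (HB : 0 < B) by (apply Gamma_gt0; lra).
  set (lam := sqrt (B / A)).
  assert (Hl2 : lam * lam = B / A) by (apply sqrt_sqrt; left; apply Rdiv_lt_0_compat; lra).
  assert (Hl : 0 < lam) by (apply sqrt_lt_R0, Rdiv_lt_0_compat; lra).
  assert (Hle : 2 * Gamma y + 0 * Gamma y <= lam * A + / lam * B).
  { apply (is_lim2_le (fun a b => 2 * RInt (gamma_integrand y) a b + 0 * RInt (gamma_integrand y) a b)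
              (fun a b => lam * RInt (gamma_integrand (y - / 2)) a b
                          + / lam * RInt (gamma_integrand (y + / 2)) a b));
      try (apply is_lim2_lin; apply is_lim2_Gamma; lra).
    intros a b Ha Ha1 Hb. rewrite <- !RInt_lin by (apply ex_RInt_gamma_integrand; lra).
    apply RInt_le; [lra | | |].
    1, 2: eexists; apply is_RInt_lin; apply (RInt_correct (V:=R_CompleteNormedModule));
          apply ex_RInt_gamma_integrand; lra.
    intros t Ht. pose proof (gamma_integrand_amgm y lam t Hl ltac:(lra)). lra. }
  assert (EB : B = lam * lam * A) by (rewrite Hl2; field; lra).
  assert (Hlam : / lam * B = lam * A) by (rewrite EB; field; lra).
  assert (HG : 0 < Gamma y) by (apply Gamma_gt0; lra).
  replace (A * B) with ((lam * A) ^ 2) by (rewrite EB; ring).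
  apply pow_incr. lra.
Qed.

Definition gamma_ratio (x : R) : R := Gamma (x / 2 + 1) / Gamma (x / 2 + / 2).

Definition sigma (x : R) : R := 2 * gamma_ratio x ^ 2 / x.

Lemma gamma_ratio_gt0 (x : R) : 1 <= x -> 0 < gamma_ratio x.
Proof. intros. unfold gamma_ratio. apply Rdiv_lt_0_compat; apply Gamma_gt0; lra. Qed.

Lemma gamma_ratio_mul_succ (x : R) : 1 <= x -> gamma_ratio x * gamma_ratio (x + 1) = (x + 1) / 2.
Proof.
  intros Hx. unfold gamma_ratio.
  replace ((x + 1) / 2 + / 2) with (x / 2 + 1) by field.
  replace ((x + 1) / 2 + 1) with ((x / 2 + / 2) + 1) by field.
  rewrite (Gamma_succ (x / 2 + / 2)) by lra.
  assert (0 < Gamma (x / 2 + 1)) by (apply Gamma_gt0; lra).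
  assert (0 < Gamma (x / 2 + / 2)) by (apply Gamma_gt0; lra).
  field. lra.
Qed.

Lemma gamma_ratio_le_succ (x : R) : 1 <= x -> gamma_ratio x <= gamma_ratio (x + 1).
Proof.
  intros Hx. unfold gamma_ratio.
  replace ((x + 1) / 2 + / 2) with (x / 2 + 1) by field.
  pose proof (Gamma_sq_le (x / 2 + 1) ltac:(lra)) as L.
  replace (x / 2 + 1 - / 2) with (x / 2 + / 2) in L by field.
  replace (x / 2 + 1 + / 2) with ((x + 1) / 2 + 1) in L by field.
  assert (0 < Gamma (x / 2 + 1)) by (apply Gamma_gt0; lra).
  assert (0 < Gamma (x / 2 + / 2)) by (apply Gamma_gt0; lra).
  apply (Rmult_le_reg_r (Gamma (x / 2 + / 2) * Gamma (x / 2 + 1))); [nra|].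
  replace (Gamma (x / 2 + 1) / Gamma (x / 2 + / 2) * (Gamma (x / 2 + / 2) * Gamma (x / 2 + 1)))
    with (Gamma (x / 2 + 1) ^ 2) by (field; lra).
  replace (Gamma ((x + 1) / 2 + 1) / Gamma (x / 2 + 1) * (Gamma (x / 2 + / 2) * Gamma (x / 2 + 1)))
    with (Gamma (x / 2 + / 2) * Gamma ((x + 1) / 2 + 1)) by (field; lra).
  exact L.
Qed.

Lemma sigma_gt0 (x : R) : 1 <= x -> 0 < sigma x.
Proof.
  intros Hx. unfold sigma. pose proof (gamma_ratio_gt0 x Hx).
  apply Rdiv_lt_0_compat; [nra | lra].
Qed.

Lemma sigma_le (x : R) : 1 <= x -> sigma x <= 1 + 1 / x.
Proof.
  intros Hx. unfold sigma.
  pose proof (gamma_ratio_gt0 x Hx). pose proof (gamma_ratio_le_succ x Hx).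
  pose proof (gamma_ratio_mul_succ x Hx).
  assert (gamma_ratio x ^ 2 <= (x + 1) / 2) by nra.
  apply (Rmult_le_reg_r x); [lra|].
  replace (2 * gamma_ratio x ^ 2 / x * x) with (2 * gamma_ratio x ^ 2) by (field; lra).
  replace ((1 + 1 / x) * x) with (x + 1) by (field; lra). lra.
Qed.

Lemma sigma_ge1 (x : R) : 2 <= x -> 1 <= sigma x.
Proof.
  intros Hx. unfold sigma.
  pose proof (gamma_ratio_gt0 (x - 1) ltac:(lra)).
  pose proof (gamma_ratio_le_succ (x - 1) ltac:(lra)).
  pose proof (gamma_ratio_mul_succ (x - 1) ltac:(lra)).
  replace (x - 1 + 1) with x in * by ring.
  assert (x / 2 <= gamma_ratio x ^ 2) by nra.
  apply (Rmult_le_reg_r x); [lra|].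
  replace (2 * gamma_ratio x ^ 2 / x * x) with (2 * gamma_ratio x ^ 2) by (field; lra). lra.
Qed.

Lemma sigma_add2 (x : R) : 1 <= x -> sigma (x + 2) = sigma x * (x * (x + 2) / (x + 1) ^ 2).
Proof.
  intros Hx. unfold sigma.
  pose proof (gamma_ratio_mul_succ x Hx) as E0.
  pose proof (gamma_ratio_mul_succ (x + 1) ltac:(lra)) as E1.
  replace (x + 1 + 1) with (x + 2) in E1 by ring.
  pose proof (gamma_ratio_gt0 (x + 1) ltac:(lra)).
  assert (E : gamma_ratio (x + 2) = gamma_ratio x * (x + 2) / (x + 1)).
  { apply (Rmult_eq_reg_l (gamma_ratio (x + 1))); [|lra].
    rewrite E1.
    replace (gamma_ratio (x + 1) * (gamma_ratio x * (x + 2) / (x + 1)))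
      with (gamma_ratio x * gamma_ratio (x + 1) * (x + 2) / (x + 1)) by (field; lra).
    rewrite E0. field. lra. }
  rewrite E. field. lra.
Qed.

Lemma Omega_ratio (n : nat) : (1 <= n)%nat ->
  Omega (n - 1) / Omega n = sqrt (INR n / (2 * PI)) * sqrt (sigma (INR n)).
Proof.
  intros Hn. unfold Omega. rewrite minus_INR by exact Hn. simpl (INR 1).
  assert (Hx : 1 <= INR n) by (apply le_INR in Hn; exact Hn).
  set (x := INR n) in *.
  assert (HPI : 0 < PI) by apply PI_RGT_0.
  assert (Hs : 0 < sqrt PI) by (apply sqrt_lt_R0; lra).
  pose proof (gamma_ratio_gt0 x Hx) as Hr.
  assert (EP : Rpower PI (x / 2) = Rpower PI ((x - 1) / 2) * sqrt PI).
  { rewrite <- Rpower_sqrt by exact HPI. rewrite <- Rpower_plus. f_equal. field. }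
  assert (0 < Rpower PI ((x - 1) / 2)) by (unfold Rpower; apply exp_pos).
  rewrite EP. replace ((x - 1) / 2 + 1) with (x / 2 + / 2) by field.
  pose proof (sigma_gt0 x Hx).
  rewrite <- sqrt_mult; [| apply Rdiv_le_0_compat; lra | lra].
  replace (x / (2 * PI) * sigma x) with ((gamma_ratio x / sqrt PI) ^ 2).
  - rewrite sqrt_pow2 by (left; apply Rdiv_lt_0_compat; lra).
    assert (0 < Gamma (x / 2 + / 2)) by (apply Gamma_gt0; lra).
    assert (0 < Gamma (x / 2 + 1)) by (apply Gamma_gt0; lra).
    unfold gamma_ratio. field. lra.
  - unfold sigma. rewrite <- (sqrt_sqrt PI) at 2 by lra. field. lra.
Qed.

Definition c_real (x : R) : R :=
  1 + 1 / (4 * x) + 1 / (32 * x ^ 2) - 5 / (128 * x ^ 3)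
    - 21 / (2048 * x ^ 4) + 399 / (8192 * x ^ 5).

Definition d_real (x : R) : R := c_real x + 869 / (65536 * x ^ 6).

Definition c_num (x : R) : R := 8192 * x ^ 5 + 2048 * x ^ 4 + 256 * x ^ 3 - 320 * x ^ 2 - 84 * x + 399.

Definition d_num (x : R) : R := 8 * x * c_num x + 869.

Lemma c_real_eq (x : R) : 0 < x -> c_real x = c_num x / (8192 * x ^ 5).
Proof. intros. unfold c_real, c_num. field. lra. Qed.

Lemma d_real_eq (x : R) : 0 < x -> d_real x = d_num x / (65536 * x ^ 6).
Proof. intros. unfold d_real, d_num. rewrite c_real_eq by lra. field. lra. Qed.

Lemma c_real_expand (x : R) : 0 < x -> c_real x = 1 + / x / 4 + (/ x) ^ 2 / 32
  - 5 * (/ x) ^ 3 / 128 - 21 * (/ x) ^ 4 / 2048 + 399 * (/ x) ^ 5 / 8192.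
Proof. intros. unfold c_real. field. lra. Qed.

Lemma pow_decr_chain (u : R) : 0 < u -> u <= 1 ->
  0 < u ^ 6 /\ u ^ 6 <= u ^ 5 /\ u ^ 5 <= u ^ 4 /\ u ^ 4 <= u ^ 3 /\ u ^ 3 <= u ^ 2 /\ u ^ 2 <= u.
Proof.
  intros. assert (0 < u ^ 2) by nra. assert (0 < u ^ 3) by nra. assert (0 < u ^ 4) by nra.
  assert (0 < u ^ 5) by nra.
  repeat split; simpl; nra.
Qed.

Lemma c_real_gt0_sq_le (x : R) : 1 <= x -> 0 < c_real x /\ c_real x ^ 2 <= 1 + 3 / x.
Proof.
  intros Hx. rewrite c_real_expand by lra.
  assert (Hu : 0 < / x) by (apply Rinv_0_lt_compat; lra).
  assert (Hu1 : / x <= 1) by (rewrite <- Rinv_1; apply Rinv_le_contravar; lra).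
  replace (3 / x) with (3 * / x) by (field; lra).
  set (u := / x) in *.
  destruct (pow_decr_chain u Hu Hu1) as (P6 & P5 & P4 & P3 & P2 & P1).
  set (c := 1 + u / 4 + u ^ 2 / 32 - 5 * u ^ 3 / 128 - 21 * u ^ 4 / 2048 + 399 * u ^ 5 / 8192).
  assert (0 < c) by (unfold c; lra).
  assert (c <= 1 + u) by (unfold c; lra).
  split; [lra|]. assert (u ^ 2 = u * u) by ring. nra.
Qed.

Lemma d_real_ge1 (x : R) : 1 <= x -> 1 <= d_real x.
Proof.
  intros Hx. unfold d_real. rewrite c_real_expand by lra.
  replace (869 / (65536 * x ^ 6)) with (869 * (/ x) ^ 6 / 65536) by (field; lra).
  assert (Hu : 0 < / x) by (apply Rinv_0_lt_compat; lra).
  assert (Hu1 : / x <= 1) by (rewrite <- Rinv_1; apply Rinv_le_contravar; lra).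
  set (u := / x) in *.
  destruct (pow_decr_chain u Hu Hu1) as (P6 & P5 & P4 & P3 & P2 & P1). lra.
Qed.

Lemma horner_ge0 (a t b : R) : 0 <= a -> 0 <= t -> 0 <= b -> 0 <= a + t * b.
Proof. intros. nra. Qed.

Lemma horner_gt0 (a t b : R) : 0 < a -> 0 <= t -> 0 <= b -> 0 < a + t * b.
Proof. intros. nra. Qed.

Ltac solve_horner_ge0 := first [ apply horner_ge0; [lra | assumption | solve_horner_ge0] | lra ].
Ltac solve_horner_gt0 := apply horner_gt0; [lra | assumption | solve_horner_ge0].

(* Horner forms with positive coefficients of the polynomials compared in
   [c_real_step] (in [t = x - 13]) and [d_real_step] (in [t = x - 1]). *)
Definition c_gap (t : R) : R :=
  196516705912161428602809 + t * (430317691859961907319934 + t * (325756349511790022880909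
    + t * (135251023024656911882556 + t * (36391941991526317165474
    + t * (6887246668043362522468 + t * (959379179752241858354 + t * (100935310026017667488
    + t * (8126615435137435173 + t * (502403504496278574 + t * (23711225969668481
    + t * (840451329710612 + t * (21686366658880 + t * (384970440448
    + t * (4207441920 + t * 21356544)))))))))))))).

Definition d_gap (t : R) : R :=
  706928947587143 + t * (7951560436766348 + t * (41812435401804878 + t * (136303464278087172
    + t * (308276175874833001 + t * (513250554281515680 + t * (651550676637168356
    + t * (644631865380595560 + t * (503818367309567881 + t * (313362894432660396
    + t * (155483118083036814 + t * (61405726774491284 + t * (19163751789973735
    + t * (4663268354880296 + t * (865619423477536 + t * (118317517533696 + t * (11218749741056
    + t * (658801082368 + t * 18040422400))))))))))))))))).

Lemma c_gap_gt0 (t : R) : 0 <= t -> 0 < c_gap t.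
Proof. intros Ht. unfold c_gap. solve_horner_gt0. Qed.

Lemma d_gap_gt0 (t : R) : 0 <= t -> 0 < d_gap t.
Proof. intros Ht. unfold d_gap. solve_horner_gt0. Qed.

Lemma c_gap_eq (x : R) :
  (x + 1) ^ 2 * x ^ 10 * c_num (x + 2) ^ 2 - x * (x + 2) ^ 11 * c_num x ^ 2 = c_gap (x - 13).
Proof. unfold c_gap, c_num. ring. Qed.

Lemma d_gap_eq (x : R) :
  x * (x + 2) ^ 13 * d_num x ^ 2 - (x + 1) ^ 2 * x ^ 12 * d_num (x + 2) ^ 2 = d_gap (x - 1).
Proof. unfold d_gap, d_num, c_num. ring. Qed.

Lemma c_real_step (x : R) : 13 <= x ->
  x * (x + 2) * c_real x ^ 2 < (x + 1) ^ 2 * c_real (x + 2) ^ 2.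
Proof.
  intros Hx. rewrite !c_real_eq by lra.
  pose proof (c_gap_eq x). pose proof (c_gap_gt0 (x - 13) ltac:(lra)).
  set (k := 8192 ^ 2 * x ^ 10 * (x + 2) ^ 10).
  assert (Hk : 0 < k)
    by (unfold k; apply Rmult_lt_0_compat; [apply Rmult_lt_0_compat|]; apply pow_lt; lra).
  apply (Rmult_lt_reg_r k); [exact Hk|].
  replace (x * (x + 2) * (c_num x / (8192 * x ^ 5)) ^ 2 * k)
    with (x * (x + 2) ^ 11 * c_num x ^ 2) by (unfold k; field; lra).
  replace ((x + 1) ^ 2 * (c_num (x + 2) / (8192 * (x + 2) ^ 5)) ^ 2 * k)
    with ((x + 1) ^ 2 * x ^ 10 * c_num (x + 2) ^ 2) by (unfold k; field; lra).
  lra.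
Qed.

Lemma d_real_step (x : R) : 1 <= x ->
  (x + 1) ^ 2 * d_real (x + 2) ^ 2 < x * (x + 2) * d_real x ^ 2.
Proof.
  intros Hx. rewrite !d_real_eq by lra.
  pose proof (d_gap_eq x). pose proof (d_gap_gt0 (x - 1) ltac:(lra)).
  set (k := 65536 ^ 2 * x ^ 12 * (x + 2) ^ 12).
  assert (Hk : 0 < k)
    by (unfold k; apply Rmult_lt_0_compat; [apply Rmult_lt_0_compat|]; apply pow_lt; lra).
  apply (Rmult_lt_reg_r k); [exact Hk|].
  replace (x * (x + 2) * (d_num x / (65536 * x ^ 6)) ^ 2 * k)
    with (x * (x + 2) ^ 13 * d_num x ^ 2) by (unfold k; field; lra).
  replace ((x + 1) ^ 2 * (d_num (x + 2) / (65536 * (x + 2) ^ 6)) ^ 2 * k)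
    with ((x + 1) ^ 2 * x ^ 12 * d_num (x + 2) ^ 2) by (unfold k; field; lra).
  lra.
Qed.

(* The last hypothesis is a quantitative form of [liminf h >= 1]. *)
Lemma one_lt_of_decreasing_step (h : R -> R) (x K : R) : 0 < x -> 0 <= K ->
  (forall z, x <= z -> h (z + 2) < h z) ->
  (forall z, x <= z -> 1 <= h z * (1 + K / z)) ->
  1 < h x.
Proof.
  intros Hx HK Hstep Hlow. apply Rnot_le_lt. intro Hhx.
  set (th := h (x + 2)).
  assert (Hth1 : th < 1) by (unfold th; pose proof (Hstep x ltac:(lra)); lra).
  assert (Hth0 : 0 < th).
  { pose proof (Hlow (x + 2) ltac:(lra)) as L. fold th in L.
    assert (0 <= K / (x + 2)) by (apply Rdiv_le_0_compat; lra).
    apply Rnot_le_lt. intro. nra. }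
  assert (Hiter : forall k : nat, h (x + 2 + 2 * INR k) <= th).
  { induction k as [|k IH].
    - unfold th. replace (x + 2 + 2 * INR 0) with (x + 2) by (simpl; ring). lra.
    - rewrite S_INR. replace (x + 2 + 2 * (INR k + 1)) with (x + 2 + 2 * INR k + 2) by ring.
      pose proof (pos_INR k). pose proof (Hstep (x + 2 + 2 * INR k) ltac:(lra)). lra. }
  destruct (INR_unbounded (K / (1 - th))) as [k Hk].
  set (m := x + 2 + 2 * INR k).
  pose proof (pos_INR k).
  assert (Hm : 0 < m) by (unfold m; lra).
  assert (HKm : K / m < 1 - th).
  { apply (Rmult_lt_reg_r m); [exact Hm|].
    replace (K / m * m) with K by (field; lra).
    apply (Rmult_lt_reg_r (/ (1 - th))); [apply Rinv_0_lt_compat; lra|].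
    replace ((1 - th) * m * / (1 - th)) with m by (field; lra).
    unfold m. unfold Rdiv in Hk. lra. }
  assert (0 <= K / m) by (apply Rdiv_le_0_compat; lra).
  pose proof (Hiter k) as Hhm. fold m in Hhm.
  pose proof (Hlow m ltac:(unfold m; lra)) as L.
  assert (h m * (1 + K / m) <= th * (1 + K / m)) by (apply Rmult_le_compat_r; lra).
  nra.
Qed.

Lemma c_real_sq_lt_sigma (x : R) : 13 <= x -> c_real x ^ 2 < sigma x.
Proof.
  intros Hx.
  assert (Hc : forall z, 13 <= z -> 0 < c_real z ^ 2)
    by (intros z Hz; apply pow_lt, c_real_gt0_sq_le; lra).
  cut (1 < sigma x / c_real x ^ 2).
  { intros H. pose proof (Hc x Hx).
    apply (Rmult_lt_reg_r (/ c_real x ^ 2)); [apply Rinv_0_lt_compat; lra|].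
    rewrite Rinv_r by lra. exact H. }
  apply (one_lt_of_decreasing_step (fun z => sigma z / c_real z ^ 2) x 3); [lra | lra | |].
  - intros z Hz. rewrite sigma_add2 by lra.
    pose proof (c_real_step z ltac:(lra)).
    pose proof (Hc z ltac:(lra)). pose proof (Hc (z + 2) ltac:(lra)).
    pose proof (sigma_gt0 z ltac:(lra)).
    set (a := c_real z ^ 2) in *. set (b := c_real (z + 2) ^ 2) in *. set (s := sigma z) in *.
    apply (Rmult_lt_reg_r (a * b * (z + 1) ^ 2)).
    { apply Rmult_lt_0_compat; [apply Rmult_lt_0_compat; lra | apply pow_lt; lra]. }
    replace (s * (z * (z + 2) / (z + 1) ^ 2) / b * (a * b * (z + 1) ^ 2))
      with (s * (z * (z + 2) * a)) by (field; lra).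
    replace (s / a * (a * b * (z + 1) ^ 2)) with (s * ((z + 1) ^ 2 * b)) by (field; lra).
    apply Rmult_lt_compat_l; lra.
  - intros z Hz. destruct (c_real_gt0_sq_le z ltac:(lra)) as [Hc1 Hc2].
    pose proof (sigma_ge1 z ltac:(lra)). pose proof (Hc z ltac:(lra)).
    apply (Rmult_le_reg_r (c_real z ^ 2)); [lra|].
    replace (sigma z / c_real z ^ 2 * (1 + 3 / z) * c_real z ^ 2)
      with (sigma z * (1 + 3 / z)) by (field; lra).
    assert (0 < 3 / z) by (apply Rdiv_lt_0_compat; lra).
    apply Rle_trans with (1 * (1 + 3 / z)); [lra | apply Rmult_le_compat_r; lra].
Qed.

Lemma sigma_lt_d_real_sq (x : R) : 1 <= x -> sigma x < d_real x ^ 2.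
Proof.
  intros Hx.
  assert (Hd : forall z, 1 <= z -> 1 <= d_real z ^ 2)
    by (intros z Hz; pose proof (d_real_ge1 z Hz); simpl; nra).
  cut (1 < d_real x ^ 2 / sigma x).
  { intros H. pose proof (sigma_gt0 x Hx).
    apply (Rmult_lt_reg_r (/ sigma x)); [apply Rinv_0_lt_compat; lra|].
    rewrite Rinv_r by lra. exact H. }
  apply (one_lt_of_decreasing_step (fun z => d_real z ^ 2 / sigma z) x 1); [lra | lra | |].
  - intros z Hz. rewrite sigma_add2 by lra.
    pose proof (d_real_step z ltac:(lra)).
    pose proof (Hd z ltac:(lra)). pose proof (Hd (z + 2) ltac:(lra)).
    pose proof (sigma_gt0 z ltac:(lra)).
    set (a := d_real z ^ 2) in *. set (b := d_real (z + 2) ^ 2) in *. set (s := sigma z) in *.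
    apply (Rmult_lt_reg_r (s * z * (z + 2))).
    { apply Rmult_lt_0_compat; [apply Rmult_lt_0_compat|]; lra. }
    replace (b / (s * (z * (z + 2) / (z + 1) ^ 2)) * (s * z * (z + 2))) with ((z + 1) ^ 2 * b)
      by (field; lra).
    replace (a / s * (s * z * (z + 2))) with (z * (z + 2) * a) by (field; lra).
    lra.
  - intros z Hz. pose proof (sigma_le z ltac:(lra)). pose proof (Hd z ltac:(lra)).
    pose proof (sigma_gt0 z ltac:(lra)).
    apply (Rmult_le_reg_r (sigma z)); [lra|].
    replace (d_real z ^ 2 / sigma z * (1 + 1 / z) * sigma z)
      with (d_real z ^ 2 * (1 + 1 / z)) by (field; lra).
    assert (0 < 1 / z) by (apply Rdiv_lt_0_compat; lra).
    apply Rle_trans with (1 * (1 + 1 / z)); [lra | apply Rmult_le_compat_r; lra].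
Qed.

(* At [x = 12] the one-step comparison [c_real_step] fails; we step from 12 to 16 instead. *)
Lemma c_real_sq_lt_sigma_12 : c_real 12 ^ 2 < sigma 12.
Proof.
  assert (Hc : 12 * 14 * (14 * 16) * c_real 12 ^ 2 < 13 ^ 2 * 15 ^ 2 * c_real 16 ^ 2)
    by (unfold c_real; lra).
  pose proof (c_real_sq_lt_sigma 16 ltac:(lra)) as H16.
  replace 16 with (12 + 2 + 2) in H16 at 2 by ring.
  rewrite !sigma_add2 in H16 by lra.
  replace (12 + 2) with 14 in H16 by ring.
  pose proof (sigma_gt0 12 ltac:(lra)).
  apply Rnot_le_lt. intro Hle.
  assert (sigma 12 * (12 * 14 / 13 ^ 2) * (14 * 16 / 15 ^ 2)
          <= c_real 12 ^ 2 * (12 * 14 / 13 ^ 2) * (14 * 16 / 15 ^ 2))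
    by (apply Rmult_le_compat_r; [lra|]; apply Rmult_le_compat_r; lra).
  replace (12 * (12 + 2) / (12 + 1) ^ 2) with (12 * 14 / 13 ^ 2) in H16 by field.
  replace (14 * (14 + 2) / (14 + 1) ^ 2) with (14 * 16 / 15 ^ 2) in H16 by field.
  lra.
Qed.

Lemma c_real_sq_lt_sigma_nat (n : nat) : (12 <= n)%nat -> c_real (INR n) ^ 2 < sigma (INR n).
Proof.
  intros Hn. destruct (Nat.eq_dec n 12) as [->|Hne].
  - replace (INR 12) with 12 by (simpl; ring). exact c_real_sq_lt_sigma_12.
  - apply c_real_sq_lt_sigma.
    replace 13 with (INR 13) by (simpl; ring). apply le_INR. lia.
Qed.

Theorem theorem9 :
  (forall n : nat, (12 <= n)%nat ->
     sqrt (INR n / (2 * PI)) * c_fn n < Omega (n - 1) / Omega n) /\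
  (forall n : nat, (1 <= n)%nat ->
     Omega (n - 1) / Omega n < sqrt (INR n / (2 * PI)) * d_fn n).
Proof.
  assert (Hs : forall n : nat, (1 <= n)%nat -> 0 < sqrt (INR n / (2 * PI))).
  { intros n Hn. apply sqrt_lt_R0, Rdiv_lt_0_compat;
      [apply lt_0_INR; lia | pose proof PI_RGT_0; lra]. }
  split; intros n Hn; rewrite Omega_ratio by lia; apply Rmult_lt_compat_l; try (apply Hs; lia).
  - change (c_fn n) with (c_real (INR n)).
    assert (Hx : 1 <= INR n) by (replace 1 with (INR 1) by reflexivity; apply le_INR; lia).
    rewrite <- (sqrt_pow2 (c_real (INR n))) by (left; apply c_real_gt0_sq_le, Hx).
    apply sqrt_lt_1_alt. split; [apply pow2_ge_0 | apply c_real_sq_lt_sigma_nat, Hn].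
  - change (d_fn n) with (d_real (INR n)).
    assert (Hx : 1 <= INR n) by (replace 1 with (INR 1) by reflexivity; apply le_INR; lia).
    rewrite <- (sqrt_pow2 (d_real (INR n))) by (pose proof (d_real_ge1 _ Hx); lra).
    apply sqrt_lt_1_alt. split; [left; apply sigma_gt0, Hx | apply sigma_lt_d_real_sq, Hx].
Qed.
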